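(* Let $f$ be an L-additive arithmetic function whose associated completely multiplicative function $h_f$ is nonzero-valued, and let $\Lambda_f$ be the generalized von Mangoldt function associated to $f$. Then for every integer $n\geq 1$, $$f(n)=h_f(n)\sum_{d\mid n}\Lambda_f(d),$$ i.e. in terms of Dirichlet convolution, $f=h_f\ast (h_f\Lambda_f)$.
   Context: An arithmetic function is a function $\mathbb{N}\to\mathbb{C}$. An arithmetic function $f$ is L-additive (Leibniz-additive) if there is a completely multiplicative function $h_f$ (so $h_f(1)=1$ and $h_f(mn)=h_f(m)h_f(n)$ for all $m,n$) such that $f(mn)=f(m)h_f(n)+f(n)h_f(m)$ for all positive integers $m,n$; such an $h_f$ is fixed. The generalized von Mangoldt function is defined by $\Lambda_f(n)=\frac{f(p)}{h_f(p)}$ if $n=p^k$ for some prime $p$ and integer $k\geq 1$, and $\Lambda_f(n)=0$ otherwise. The Dirichlet convolution is $(F\ast G)(n)=\sum_{d\mid n}F(d)G(n/d)$, and $h_f\Lambda_f$ denotes the pointwise product. *)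

From mathcomp Require Import all_boot all_order all_algebra.
Set Implicit Arguments. Unset Strict Implicit. Unset Printing Implicit Defensive.
Import GRing.Theory Num.Theory.
Local Open Scope ring_scope.

(* Arithmetic functions N -> C are modelled as nat -> C; the value at 0 is
   irrelevant and all conditions are imposed on positive arguments only.
   C is an arbitrary numClosedFieldType (MathComp's abstraction of the
   complex numbers; e.g. complex R for a real closed field R). *)

Definition completely_multiplicative (C : numClosedFieldType) (h : nat -> C) : Prop :=
  h 1%N = 1 /\ forall m n : nat, (0 < m)%N -> (0 < n)%N -> h (m * n)%N = h m * h n.

Definition L_additive (C : numClosedFieldType) (f h : nat -> C) : Prop :=
  completely_multiplicative h /\
  forall m n : nat, (0 < m)%N -> (0 < n)%N ->
    f (m * n)%N = f m * h n + f n * h m.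

Definition prime_power (n : nat) : bool :=
  [exists p : 'I_n.+1, [exists k : 'I_n.+1,
     prime p && (0 < k)%N && (n == p ^ k)%N]].

Definition vonMangoldt (C : numClosedFieldType) (f h : nat -> C) (n : nat) : C :=
  if prime_power n then f (pdiv n) / h (pdiv n) else 0.

Definition dconv (C : numClosedFieldType) (F G : nat -> C) (n : nat) : C :=
  \sum_(d <- divisors n) F d * G (n %/ d)%N.

From mathcomp Require Import all_boot all_order all_algebra.
Set Implicit Arguments.
Unset Strict Implicit.
Unset Printing Implicit Defensive.
Import GRing.Theory Num.Theory.
Local Open Scope ring_scope.

(* Dividing by h turns the Leibniz rule into complete additivity of g := f/h,
   and Lambda_f(p^k) = g(p).  For a completely additive g and n = p m with p
   prime, the prime powers dividing n are those dividing m together with the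
   single new power p^(v_p(m)+1), so the sum of Lambda_f over the divisors of
   n is g(m) + g(p) = g(n) by induction.  Finally h(d) h(n/d) = h(n) turns
   the Dirichlet convolution into h(n) times the same divisor sum. *)

Lemma prime_powerP d :
  reflect (exists p k, [/\ prime p, (0 < k)%N & d = p ^ k]%N) (prime_power d).
Proof.
apply: (iffP existsP) => [[p /existsP[k /andP[/andP[pr_p k_gt0] /eqP->]]]|].
  by exists (val p), (val k).
case=> p [k [pr_p k_gt0 ->]].
have p_gt1 := prime_gt1 pr_p.
have lt_p : (p < (p ^ k).+1)%N by rewrite ltnS -{1}(expn1 p) leq_pexp2l // prime_gt0.
have lt_k : (k < (p ^ k).+1)%N by rewrite ltnS ltnW // ltn_expl.
by exists (Ordinal lt_p); apply/existsP; exists (Ordinal lt_k); rewrite /= pr_p k_gt0 eqxx.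
Qed.

Lemma prime_power_pfactor p k : prime p -> prime_power (p ^ k.+1).
Proof. by move=> pr_p; apply/prime_powerP; exists p, k.+1. Qed.

Lemma prime_power1 : ~~ prime_power 1.
Proof.
apply/prime_powerP=> [[p [k [pr_p k_gt0]]]]; rewrite -(expn0 p) => /eqP.
by rewrite eqn_exp2l ?prime_gt1 // eq_sym eqn0Ngt k_gt0.
Qed.

Lemma prime_power_dvdn_mul p m d :
    prime p -> (0 < m)%N -> prime_power d -> (d %| p * m)%N -> ~~ (d %| m)%N ->
  d = (p ^ (logn p m).+1)%N.
Proof.
move=> pr_p m_gt0 /prime_powerP[q [k [pr_q k_gt0 ->]]] dv_pm ndv_m.
have [eq_qp | ne_qp] := eqVneq q p; last first.
  have co_qp : coprime (q ^ k) p by rewrite coprime_pexpl // prime_coprime // dvdn_prime2.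
  by move: dv_pm; rewrite (Gauss_dvdr _ co_qp) (negPf ndv_m).
have p_gt0 := prime_gt0 pr_p; move: dv_pm ndv_m.
rewrite eq_qp !pfactor_dvdn ?muln_gt0 ?p_gt0 // lognM // logn_prime // eqxx add1n.
rewrite -ltnNge => le_k lt_k.
by congr (_ ^ _)%N; apply/eqP; rewrite eqn_leq le_k.
Qed.

Lemma divisors_dvdn m n :
  (0 < n)%N -> (m %| n)%N -> divisors m = [seq d <- divisors n | (d %| m)%N].
Proof.
move=> n_gt0 dv_mn; have m_gt0 := dvdn_gt0 n_gt0 dv_mn.
apply: (irr_sorted_eq ltn_trans ltnn (sorted_divisors_ltn m)).
  exact/sorted_filter/sorted_divisors_ltn/ltn_trans.
move=> d; rewrite mem_filter -!dvdn_divisors //.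
by case dv_dm: (d %| m)%N; rewrite // (dvdn_trans dv_dm).
Qed.

Lemma divn_divnK n d : (0 < n)%N -> (d %| n)%N -> (n %/ (n %/ d))%N = d.
Proof. by move=> n_gt0 dv_dn; rewrite divnA // mulKn. Qed.

Lemma perm_divisors_compl n :
  (0 < n)%N -> perm_eq (divisors n) [seq (n %/ d)%N | d <- divisors n].
Proof.
move=> n_gt0; apply: uniq_perm (divisors_uniq n) _ _.
  rewrite map_inj_in_uniq ?divisors_uniq // => a b.
  rewrite -!dvdn_divisors // => dv_an dv_bn eq_ab.
  by rewrite -(divn_divnK n_gt0 dv_an) eq_ab divn_divnK.
move=> d; apply/idP/mapP => [|[e]].
  rewrite -dvdn_divisors // => dv_dn; exists (n %/ d)%N; last by rewrite divn_divnK.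
  by rewrite -dvdn_divisors // dvdn_div.
by rewrite -!dvdn_divisors // => dv_en ->; rewrite dvdn_div.
Qed.

Lemma big_divisors_compl (R : Type) (idx : R) (op : Monoid.com_law idx) n F :
    (0 < n)%N ->
  \big[op/idx]_(d <- divisors n) F (n %/ d)%N = \big[op/idx]_(d <- divisors n) F d.
Proof. by move=> n_gt0; rewrite [RHS](perm_big _ (perm_divisors_compl n_gt0)) big_map. Qed.

Definition mangoldt (V : zmodType) (g : nat -> V) (d : nat) : V :=
  if prime_power d then g (pdiv d) else 0.

Lemma mangoldt_pfactor (V : zmodType) (g : nat -> V) p k :
  prime p -> mangoldt g (p ^ k.+1) = g p.
Proof. by move=> pr_p; rewrite /mangoldt prime_power_pfactor // pdiv_pfactor. Qed.

Section CompletelyAdditive.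

Variables (V : zmodType) (g : nat -> V).
Hypothesis gM : forall m n, (0 < m)%N -> (0 < n)%N -> g (m * n)%N = g m + g n.

Lemma g1_eq0 : g 1 = 0.
Proof. by apply: (addrI (g 1)); rewrite addr0 -gM. Qed.

Lemma sum_mangoldt_dvdn_mul p m :
    prime p -> (0 < m)%N ->
  \sum_(d <- divisors (p * m) | ~~ (d %| m)%N) mangoldt g d = g p.
Proof.
move=> pr_p m_gt0; have p_gt0 := prime_gt0 pr_p.
have pm_gt0 : (0 < p * m)%N by rewrite muln_gt0 p_gt0.
set q := (p ^ (logn p m).+1)%N.
have q_div : q \in divisors (p * m).
  by rewrite -dvdn_divisors // /q expnS dvdn_pmul2l // pfactor_dvdnn.
have ndv_q : ~~ (q %| m)%N by rewrite /q pfactor_dvdn // ltnn.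
rewrite big_mkcond (bigD1_seq q q_div (divisors_uniq _)) /= ndv_q mangoldt_pfactor //.
rewrite big1_seq ?addr0 // => d /andP[ne_dq]; rewrite -dvdn_divisors // => dv_d.
rewrite /mangoldt; case: ifP => // ndv_d; case: ifP => // pp_d.
by move: ne_dq; rewrite (prime_power_dvdn_mul pr_p m_gt0 pp_d dv_d ndv_d) eqxx.
Qed.

Lemma sum_mangoldt_divisors n : (0 < n)%N -> \sum_(d <- divisors n) mangoldt g d = g n.
Proof.
elim/ltn_ind: n => n IHn n_gt0; have [n_gt1 | n_le1] := ltnP 1 n; last first.
  have -> : n = 1%N by apply/eqP; rewrite eqn_leq n_le1 n_gt0.
  by rewrite /divisors /= big_seq1 g1_eq0 /mangoldt (negPf prime_power1).
set p := pdiv n; set m := (n %/ p)%N.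
have pr_p : prime p by apply: pdiv_prime.
have n_pm : n = (p * m)%N by rewrite mulnC divnK ?pdiv_dvd.
have m_gt0 : (0 < m)%N by rewrite divn_gt0 ?prime_gt0 // pdiv_leq.
have lt_mn : (m < n)%N by rewrite ltn_Pdiv ?prime_gt1.
rewrite (bigID (fun d => (d %| m)%N)) /= -big_filter.
have dv_mn : (m %| n)%N by rewrite n_pm dvdn_mull.
rewrite -divisors_dvdn // IHn // n_pm sum_mangoldt_dvdn_mul //.
by rewrite addrC gM // prime_gt0.
Qed.

End CompletelyAdditive.

Lemma L_additive_div (C : numClosedFieldType) (f h : nat -> C) :
    L_additive f h -> (forall n, (0 < n)%N -> h n != 0) ->
  forall m n, (0 < m)%N -> (0 < n)%N ->
    f (m * n)%N / h (m * n)%N = f m / h m + f n / h n.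
Proof.
case=> [[_ hM] fM] h_neq0 m n m_gt0 n_gt0.
by rewrite fM // hM // addf_div ?h_neq0.
Qed.

Lemma dconv_completely_multiplicative (C : numClosedFieldType) (h F : nat -> C) n :
    completely_multiplicative h -> (0 < n)%N ->
  dconv h (fun d => h d * F d) n = h n * \sum_(d <- divisors n) F d.
Proof.
case=> _ hM n_gt0; rewrite big_distrr -(big_divisors_compl _ _ n_gt0) /=.
apply: eq_big_seq => d; rewrite -dvdn_divisors // => dv_dn.
have d_gt0 := dvdn_gt0 n_gt0 dv_dn.
have nd_gt0 : (0 < n %/ d)%N by rewrite divn_gt0 // dvdn_leq.
by rewrite mulrA -hM // mulnC divnK.
Qed.

Lemma vonMangoldtE (C : numClosedFieldType) (f h : nat -> C) :
  vonMangoldt f h = mangoldt (fun n => f n / h n).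
Proof. by []. Qed.

Theorem theorem2p1 (C : numClosedFieldType) (f h : nat -> C)
  (hLadd : L_additive f h)
  (hnz : forall n : nat, (0 < n)%N -> h n != 0) :
  forall n : nat, (0 < n)%N ->
    f n = h n * \sum_(d <- divisors n) vonMangoldt f h d /\
    f n = dconv h (fun d => h d * vonMangoldt f h d) n.
Proof.
move=> n n_gt0.
have sumE : \sum_(d <- divisors n) vonMangoldt f h d = f n / h n.
  by rewrite vonMangoldtE sum_mangoldt_divisors //; apply: L_additive_div.
have fE : f n = h n * \sum_(d <- divisors n) vonMangoldt f h d.
  by rewrite sumE mulrC divfK ?hnz.
by split; rewrite // dconv_completely_multiplicative //; case: hLadd.
Qed.
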